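(* Let $p$ be a prime. Every $p^\alpha$-periodic map $\mathbb{Z}\to\mathbb{Z}_{p^\beta}$ ($\alpha,\beta\ge1$) is described by a $\mathbb{Z}_{p^\beta}$-polyfract, i.e. $\mathbb{Z}_{p^\beta}\binom{X}{\mathbb{Z}_{p^\alpha}}=\mathbb{Z}_{p^\beta}^{\mathbb{Z}_{p^\alpha}}$. More generally, if $q_1,\dots,q_n\ge p$ are powers of $p$ and $B$ is a finite commutative $p$-group, then every map $\mathbb{Z}_{q_1}\times\cdots\times\mathbb{Z}_{q_n}\to B$ is polyfractal: $$B\binom{X_1,\dots,X_n}{\mathbb{Z}_{q_1}\times\cdots\times\mathbb{Z}_{q_n}}=B^{\mathbb{Z}_{q_1}\times\cdots\times\mathbb{Z}_{q_n}}.$$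
   Context: $\mathbb{Z}_r=\mathbb{Z}/r\mathbb{Z}$; $\binom{X}{\delta}=X(X-1)\cdots(X-\delta+1)/\delta!$, $\binom{X}{0}=1$. For a finitely generated commutative group $B$, a $B$-polyfract in $X_1,\dots,X_n$ is a formal finite sum $P=\sum_{\delta\in\mathbb{N}^n}P_\delta\prod_j\binom{X_j}{\delta_j}$ with $P_\delta\in B$, evaluated at $x\in\mathbb{Z}^n$ by $P(x)=\sum_\delta(\prod_j\binom{x_j}{\delta_j})P_\delta$. Polyfracts are identified with their evaluation maps (which is injective). $B\binom{X_1,\dots,X_n}{\mathbb{Z}_{q_1}\times\cdots\times\mathbb{Z}_{q_n}}$ is the set of $B$-polyfracts whose map on $\mathbb{Z}^n$ is $q_j$-periodic in the $j$-th variable, viewed as maps on $\mathbb{Z}_{q_1}\times\cdots\times\mathbb{Z}_{q_n}$. *)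

From HB Require Import structures.
From mathcomp Require Import all_boot all_order all_algebra all_fingroup.
Set Implicit Arguments. Unset Strict Implicit. Unset Printing Implicit Defensive.
Import Order.TTheory GRing.Theory Num.Theory.
Local Open Scope ring_scope.

(* binomz x d = x (x-1) ... (x-d+1) / d!  (computed in rat, this is an integer;
   binomz x 0 = 1).  numq extracts it as an int. *)
Definition binomq (x : int) (d : nat) : rat :=
  (\prod_(i < d) (x%:~R - i%:R)) / (d`!)%:R.
Definition binomz (x : int) (d : nat) : int := numq (binomq x d).

Definition polyfract1 (B : zmodType) (D : nat) (P : 'I_D -> B) (x : int) : B :=
  \sum_(d < D) P d *~ binomz x d.

Definition polyfract (B : zmodType) (n D : nat)
    (P : {ffun 'I_n -> 'I_D} -> B) (x : 'I_n -> int) : B :=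
  \sum_(delta : {ffun 'I_n -> 'I_D})
     P delta *~ (\prod_(j < n) binomz (x j) (delta j)).

From HB Require Import structures.
From mathcomp Require Import all_boot all_order all_algebra all_fingroup.
From mathcomp Require Import cyclic ring.
Import Order.TTheory GRing.Theory Num.Theory.
Local Open Scope ring_scope.

(* Let Dif g x = g (x+1) - g x be the forward difference.
   Newton interpolation says that if Dif^N g = 0 then
   g x = sum_(d < N) (Dif^d g)(0) binom(x, d), a polyfract.  To see that
   Dif^N kills a p^a-periodic g with values in a group of exponent p^b, let
   integer polynomials act on functions by shifts (X acts as x |-> x+1), so that
   Dif^N acts as (X - 1)^N.  In Z[X] we have the Frobenius congruence
   (X - 1)^(p^a) = X^(p^a) - 1 + p R, hence
   (X - 1)^(p^a b) = (X^(p^a) - 1) T + p^b R^b: the first summand kills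
   p^a-periodic functions and the second kills B-valued ones.

   By induction on n: apply Newton interpolation in the
   first variable; the coefficients (Dif^d g)(0) are periodic functions of the
   remaining n variables, hence polyfracts by induction, and a polyfract in
   n+1 variables splits along its first multi-index coordinate.

   The univariate statement is the case n = 1 of the multivariate one. *)

Lemma int_induction (P : int -> Prop) :
  P 0 -> (forall x, P x -> P (x + 1)) -> (forall x, P (x + 1) -> P x) ->
  forall x, P x.
Proof.
move=> P0 Pup Pdown; elim/int_ind => [//|n Pn|n Pn].
  by rewrite -addn1 PoszD; apply: Pup.
by apply: Pdown; rewrite -addn1 PoszD opprD addrNK.
Qed.

Lemma binomq0 x : binomq x 0 = 1.
Proof. by rewrite /binomq big_ord0 fact0 divr1. Qed.

Lemma binomq0S d : binomq 0 d.+1 = 0.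
Proof. by rewrite /binomq big_ord_recl /= subrr !mul0r. Qed.

Lemma binomqS x d : binomq (x + 1) d.+1 = binomq x d.+1 + binomq x d.
Proof.
rewrite /binomq big_ord_recl big_ord_recr /=.
have -> : \prod_(i < d) ((x + 1)%:~R - (bump 0 i)%:R)
          = \prod_(i < d) (x%:~R - i%:R) :> rat.
  by apply: eq_bigr => i _; rewrite /bump /= add1n -addn1 natrD intrD; ring.
have fact_neq0 : (d`!)%:R != 0 :> rat by rewrite pnatr_eq0 -lt0n fact_gt0.
have dS_neq0 : (d%:R + 1) != 0 :> rat by rewrite natr1 pnatr_eq0.
by rewrite factS natrM -natr1 intrD; field; rewrite fact_neq0 dS_neq0.
Qed.

Lemma binomq_int x d : binomq x d = (binomz x d)%:~R.
Proof.
suff [z hz] : exists z : int, binomq x d = z%:~R by rewrite /binomz hz numq_int.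
elim: d x => [|d IH]; first by exists 1; rewrite binomq0.
apply: int_induction => [|y [z hz]|y [z hz]].
- by exists 0; rewrite binomq0S.
- by have [w hw] := IH y; exists (z + w); rewrite binomqS hz hw intrD.
- by have [w hw] := IH y; exists (z - w); rewrite intrB -hz binomqS hw addrK.
Qed.

Lemma binomz0 x : binomz x 0 = 1.
Proof. by apply: (@intr_inj rat); rewrite -binomq_int binomq0. Qed.

Lemma binomz0S d : binomz 0 d.+1 = 0.
Proof. by apply: (@intr_inj rat); rewrite -binomq_int binomq0S. Qed.

Lemma binomzS x d : binomz (x + 1) d.+1 = binomz x d.+1 + binomz x d.
Proof. by apply: (@intr_inj rat); rewrite intrD -!binomq_int binomqS. Qed.

Definition Dif (V : zmodType) (g : int -> V) : int -> V :=
  fun x => g (x + 1) - g x.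
Arguments Dif {V}.

Lemma eq_from_Dif (V : zmodType) (F G : int -> V) :
  F 0 = G 0 -> (forall x, Dif F x = Dif G x) -> forall x, F x = G x.
Proof.
move=> eq0 eqD; apply: int_induction => // x; have := eqD x; rewrite /Dif.
  by move=> h eqx; rewrite eqx in h; exact: addIr h.
by move=> h eqx1; rewrite eqx1 in h; apply: oppr_inj; exact: addrI h.
Qed.

Lemma iter_Dif_ext (V : zmodType) (g g' : int -> V) :
  (forall t, g t = g' t) -> forall d x, iter d Dif g x = iter d Dif g' x.
Proof. by move=> eqg; elim=> [|d IH] x //=; rewrite /Dif !IH. Qed.

Definition newton (V : zmodType) (g : int -> V) (N : nat) (x : int) : V :=
  \sum_(d < N) iter d Dif g 0 *~ binomz x d.
Arguments newton {V}.

(* By Pascal's rule, differencing a Newton series shifts its coefficients. *)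
Lemma Dif_newton (V : zmodType) (g : int -> V) N x :
  Dif (newton g N.+1) x = newton (Dif g) N x.
Proof.
rewrite [LHS]/Dif /newton -sumrB big_ord_recl !binomz0 subrr add0r.
by apply: eq_bigr => i _; rewrite lift0 binomzS mulrzDr addrAC subrr add0r iterSr.
Qed.

Lemma newton_interpolation {V : zmodType} {N : nat} {g : int -> V} :
  (forall x, iter N Dif g x = 0) -> forall x, g x = newton g N x.
Proof.
elim: N g => [|N IH] g gN x; first by rewrite /newton big_ord0; exact: gN.
apply: eq_from_Dif => [|y].
  rewrite /newton big_ord_recl binomz0 big1 ?addr0 // => i _.
  by rewrite lift0 binomz0S mulr0z.
by rewrite Dif_newton -IH // => z; rewrite -iterSr gN.
Qed.

Definition act (B : zmodType) (P : {poly int}) (g : int -> B) (x : int) : B :=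
  \sum_(i < size P) g (x + i%:Z) *~ P`_i.
Arguments act {B}.

Section Act.
Variable B : zmodType.
Implicit Types (g : int -> B) (P Q : {poly int}).

Lemma act_widen N P g x : (size P <= N)%N ->
  act P g x = \sum_(i < N) g (x + i%:Z) *~ P`_i.
Proof.
move=> sizeP; rewrite /act (big_ord_widen N (fun i => g (x + i%:Z) *~ P`_i)) //.
rewrite big_mkcond /=; apply: eq_bigr => i _; case: ifP => // /negbT.
by rewrite -leqNgt => iP; rewrite nth_default // mulr0z.
Qed.

Lemma act0 g x : act 0 g x = 0.
Proof. by rewrite /act size_poly0 big_ord0. Qed.

Lemma act1 g x : act 1 g x = g x.
Proof. by rewrite /act size_poly1 big_ord1 coefC /= addr0. Qed.

Lemma actD P Q g x : act (P + Q) g x = act P g x + act Q g x.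
Proof.
set N := maxn (size P) (size Q).
rewrite (act_widen N (P + Q)) ?size_polyD // (act_widen N P) ?leq_maxl //.
rewrite (act_widen N Q) ?leq_maxr // -big_split /=.
by apply: eq_bigr => i _; rewrite coefD mulrzDr.
Qed.

Lemma actB P Q g x : act (P - Q) g x = act P g x - act Q g x.
Proof.
rewrite actD; congr (_ + _); rewrite /act size_polyN -sumrN.
by apply: eq_bigr => i _; rewrite coefN mulrNz.
Qed.

Lemma actMn P n g x : act (P *+ n) g x = act P g x *+ n.
Proof. by elim: n => [|n IH]; rewrite ?act0 // !mulrS actD IH. Qed.

Lemma act_XnM k P g x : act ('X^k * P) g x = act P g (x + k%:Z).
Proof.
rewrite (act_widen (k + size P)%N); last first.
  by apply: leq_trans (size_polyMleq _ _) _; rewrite size_polyXn.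
rewrite big_split_ord /= big1 ?add0r => [|i _]; last first.
  by rewrite coefXnM ltn_ord mulr0z.
apply: eq_bigr => i _; rewrite coefXnM ltnNge leq_addr /= addKn.
by rewrite PoszD addrA.
Qed.

Lemma act_periodic P g (Q : int) : (forall y, g (y + Q) = g y) ->
  forall x, act P g (x + Q) = act P g x.
Proof. by move=> gQ x; apply: eq_bigr => i _; rewrite addrAC gQ. Qed.

Lemma iter_Dif_act N g x : iter N Dif g x = act (('X - 1) ^+ N) g x.
Proof.
elim: N x => [|N IH] x; first by rewrite expr0 act1.
rewrite iterS /Dif !IH exprS mulrBl mul1r actB.
by have := act_XnM 1 (('X - 1) ^+ N) g x; rewrite expr1 => ->.
Qed.
End Act.

Lemma dvdz_of_Fp_eq0 (p : nat) (m : int) :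
  prime p -> (m%:~R : 'F_p) = 0 -> (p%:Z %| m)%Z.
Proof.
move=> p_pr; have dvd_nat (n : nat) : (n%:R : 'F_p) = 0 -> (p %| n)%N.
  by move=> n0; have := val_Fp_nat p_pr n; rewrite n0 /dvdn => <-.
case: m => n; first by rewrite -pmulrn => /dvd_nat; rewrite dvdzE.
rewrite NegzE intrN => /eqP; rewrite oppr_eq0 => /eqP.
by rewrite -pmulrn => /dvd_nat; rewrite dvdzE.
Qed.

Lemma frobenius_congruence (p a : nat) : prime p ->
  exists R : {poly int}, ('X - 1) ^+ (p ^ a)%N = 'X^(p ^ a)%N - 1 + R *+ p.
Proof.
move=> p_pr.
set P := ('X - 1) ^+ (p ^ a)%N - ('X^(p ^ a)%N - 1) : {poly int}.
have P_modp : map_poly (intr : int -> 'F_p) P = 0.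
  rewrite /P rmorphB /= rmorphXn rmorphB /= map_polyX rmorphB /= map_polyXn.
  have pa_pchar : [pchar {poly 'F_p}].-nat (p ^ a)%N.
    have pchar_p : [pchar {poly 'F_p}] =i (p : nat_pred).
      by move=> q; rewrite pchar_poly (pcharf_eq (pchar_Fp p_pr)).
    by rewrite pnatX (eq_pnat _ pchar_p) pnat_id.
  by rewrite rmorph1 exprDn_pchar // exprNn_pchar // expr1n subrr.
have p_dvd_coef i : (p%:Z %| P`_i)%Z.
  by apply: dvdz_of_Fp_eq0 => //; rewrite -coef_map P_modp coef0.
exists (\poly_(i < size P) ((P`_i %/ p%:Z)%Z)).
suff -> : \poly_(i < size P) ((P`_i %/ p%:Z)%Z) *+ p = P.
  by rewrite /P [RHS]addrC subrK.
apply/polyP => i; rewrite coefMn coef_poly; case: ifP => iP.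
  by rewrite -mulr_natr natz (divzK (p_dvd_coef i)).
by rewrite mul0rn nth_default // leqNgt iP.
Qed.

Lemma binomial_split (R : comPzRingType) (Y C : R) n :
  exists T, (Y + C) ^+ n = Y * T + C ^+ n.
Proof.
elim: n => [|n [T hT]]; first by exists 0; rewrite !expr0 mulr0 add0r.
by exists (T * (Y + C) + C ^+ n); rewrite exprSr hT exprSr; ring.
Qed.

Lemma Dif_kills_periodic (B : zmodType) (p a b : nat) (g : int -> B) :
  prime p -> (forall z : B, z *+ (p ^ b) = 0) ->
  (forall y, g (y + (p ^ a)%N%:Z) = g y) ->
  forall x, iter ((p ^ a) * b)%N Dif g x = 0.
Proof.
move=> p_pr expB gper x; rewrite iter_Dif_act exprM.
have [R ->] := frobenius_congruence p a p_pr.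
have [T ->] := binomial_split _ ('X^(p ^ a)%N - 1) (R *+ p) b.
rewrite actD mulrBl mul1r actB act_XnM act_periodic // subrr add0r.
by rewrite exprMn_n actMn expB.
Qed.

Lemma mulrn_card (B : finZmodType) (z : B) : z *+ #|B| = 0.
Proof. by have := expg_cardG (in_setT z); rewrite cardsT. Qed.

Lemma periodic_mod (V : zmodType) (g : int -> V) (Q : int) :
  (forall x, g (x + Q) = g x) -> forall x y, (x = y %[mod Q])%Z -> g x = g y.
Proof.
move=> gQ; have gmQ m x : g (x + m * Q) = g x.
  elim/int_induction: m x => [x|m IH x|m IH x]; first by rewrite mul0r addr0.
    by rewrite mulrDl mul1r addrA gQ IH.
  by rewrite -gQ -addrA (_ : m * Q + Q = (m + 1) * Q) ?IH // mulrDl mul1r.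
move=> x y /eqP; rewrite eqz_mod_dvd => /divzK xy.
by rewrite -(gmQ ((x - y) %/ Q)%Z y) xy addrC subrK.
Qed.

Section Multivariate.
Variables (B : zmodType) (D : nat).

Definition cons_index {n : nat} (de : 'I_D * {ffun 'I_n -> 'I_D}) :
    {ffun 'I_n.+1 -> 'I_D} :=
  [ffun i => if unlift ord0 i is Some j then de.2 j else de.1].

Definition tail_index {n : nat} (delta : {ffun 'I_n.+1 -> 'I_D}) :
    {ffun 'I_n -> 'I_D} :=
  [ffun j => delta (lift ord0 j)].

Lemma cons_index_bij n : bijective (@cons_index n).
Proof.
exists (fun delta : {ffun 'I_n.+1 -> 'I_D} => (delta ord0, tail_index delta)).
  case=> d e; rewrite /cons_index /tail_index ffunE unlift_none; congr pair.
  by apply/ffunP => j; rewrite !ffunE liftK.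
move=> delta; apply/ffunP => i; rewrite /cons_index /tail_index ffunE.
by case: unliftP => [j ->|->] //=; rewrite ffunE.
Qed.

Lemma tail_cons_index n d e : tail_index (@cons_index n (d, e)) = e.
Proof. by apply/ffunP => j; rewrite !ffunE liftK. Qed.

Lemma polyfract_cons n (P : {ffun 'I_n.+1 -> 'I_D} -> B) (x : 'I_n.+1 -> int) :
  polyfract P x =
  \sum_(d < D) polyfract (fun e => P (cons_index (d, e)))
                         (fun j => x (lift ord0 j)) *~ binomz (x ord0) d.
Proof.
rewrite /polyfract (reindex (@cons_index n)); last first.
  by have [g gK Kg] := cons_index_bij n; exists g => ? _.
rewrite -(pair_big xpredT xpredT (fun d e => P (cons_index (d, e)) *~
   (\prod_(j < n.+1) binomz (x j) (cons_index (d, e) j)))) /=.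
apply: eq_bigr => d _; rewrite mulrz_suml; apply: eq_bigr => e _.
rewrite big_ord_recl !ffunE unlift_none -mulrzA mulrC.
by congr (_ *~ (_ * _)); apply: eq_bigr => j _; rewrite ffunE liftK.
Qed.

Variable Q : nat.
Hypothesis Dif_kills : forall g : int -> B, (forall y, g (y + Q%:Z) = g y) ->
  forall x, iter D Dif g x = 0.

Definition periodic {n : nat} (f : ('I_n -> int) -> B) :=
  forall x y : 'I_n -> int, (forall j, (x j = y j %[mod Q%:Z])%Z) -> f x = f y.

Definition cons_point {n : nat} (t : int) (y : 'I_n -> int) : 'I_n.+1 -> int :=
  fun i => if unlift ord0 i is Some j then y j else t.

Lemma periodic_polyfract n (f : ('I_n -> int) -> B) : periodic f ->
  {P : {ffun 'I_n -> 'I_D} -> B | forall x, f x = polyfract P x}.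
Proof.
elim: n f => [|n IH] f fper.
  exists (fun _ => f (fun _ => 0)) => x; rewrite /polyfract.
  under eq_bigr => d _ do rewrite big_ord0 mulr1z.
  rewrite sumr_const card_ffun !card_ord expn0 mulr1n.
  by apply: fper => -[].
pose g y t := f (cons_point t y).
have g_per y t : g y (t + Q%:Z) = g y t.
  apply: fper => i; rewrite /cons_point.
  by case: (unlift ord0 i) => //; exact: modzDr.
pose coef (d : 'I_D) y := iter d Dif (g y) 0.
have coef_per d : periodic (coef d).
  move=> y y' yy'; apply: iter_Dif_ext => t; apply: fper => i.
  by rewrite /cons_point; case: (unlift ord0 i).
pose P d := sval (IH (coef d) (coef_per d)).
exists (fun delta : {ffun 'I_n.+1 -> 'I_D} =>
          P (delta ord0) (tail_index delta)) => x.
pose y j := x (lift ord0 j).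
have -> : f x = g y (x ord0).
  apply: fper => i; rewrite /cons_point /y.
  by case: unliftP => [j ->|->]; rewrite ?liftK ?unlift_none.
rewrite polyfract_cons (newton_interpolation (Dif_kills _ (g_per y))) /newton.
apply: eq_bigr => d _; congr (_ *~ _).
rewrite -/(coef d y) (svalP (IH (coef d) (coef_per d)) y); apply: eq_bigr => e _.
by rewrite tail_cons_index ffunE unlift_none.
Qed.
End Multivariate.
Arguments periodic_polyfract {B D Q} Dif_kills {n f}.

(* The general statement: with Q = p^a a common multiple of the periods and
   p^b the order of B, Dif^(p^a b) kills the relevant functions. *)
Lemma periodic_maps_are_polyfracts (p : nat) (n : nat) (q : 'I_n -> nat)
    (B : finZmodType) :
  prime p -> (forall j, exists k : nat, q j = (p ^ k)%N) -> p.-nat #|B| ->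
  forall f : ('I_n -> int) -> B,
    (forall x y : 'I_n -> int,
       (forall j, (x j = y j %[mod (q j)%:Z])%Z) -> f x = f y) ->
    exists (D : nat) (P : {ffun 'I_n -> 'I_D} -> B),
      forall x : 'I_n -> int, f x = polyfract P x.
Proof.
move=> p_pr q_pow pB f fper; have [b cardB] := p_natP pB.
pose a := (\sum_(j < n) logn p (q j))%N.
have q_dvd j : (q j %| p ^ a)%N.
  have [k qk] := q_pow j; rewrite qk dvdn_exp2l //.
  by rewrite /a (bigD1 j) //= qk pfactorK ?leq_addr.
have Dif_kills (g : int -> B) : (forall y, g (y + (p ^ a)%N%:Z) = g y) ->
    forall x, iter (p ^ a * b)%N Dif g x = 0.
  by apply: Dif_kills_periodic => // z; have := mulrn_card _ z; rewrite cardB.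
have f_per : periodic B (p ^ a)%N f.
  move=> x y xy; apply: fper => j; apply/eqP; rewrite eqz_mod_dvd.
  apply: (@dvdz_trans (p ^ a)%N%:Z); first by rewrite dvdzE q_dvd.
  by rewrite -eqz_mod_dvd; apply/eqP.
have [P fP] := periodic_polyfract Dif_kills f_per.
by exists (p ^ a * b)%N, P.
Qed.

Theorem corollary3p7 (p : nat) (hp : prime p) :
  (forall (alpha beta : nat), (1 <= alpha)%N -> (1 <= beta)%N ->
     forall f : int -> 'Z_(p ^ beta),
       (forall x : int, f (x + (p ^ alpha)%:Z) = f x) ->
       exists (D : nat) (P : 'I_D -> 'Z_(p ^ beta)),
         forall x : int, f x = polyfract1 P x) /\
  (forall (n : nat) (q : 'I_n -> nat) (B : finZmodType),
     (forall j, exists k : nat, q j = (p ^ k)%N) ->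
     (forall j, (p <= q j)%N) ->
     p.-nat #|B| ->
     forall f : ('I_n -> int) -> B,
       (forall x y : 'I_n -> int,
          (forall j, (x j = y j %[mod (q j)%:Z])%Z) -> f x = f y) ->
       exists (D : nat) (P : {ffun 'I_n -> 'I_D} -> B),
         forall x : 'I_n -> int, f x = polyfract P x).
Proof.
split=> [alpha beta _ beta_gt0 f fper|n q B q_pow _]; last first.
  exact: periodic_maps_are_polyfracts.
have pbeta_gt1 : (1 < p ^ beta)%N by rewrite -(expn0 p) ltn_exp2l ?prime_gt1.
have pZ : p.-nat #|'Z_(p ^ beta)| by rewrite card_ord Zp_cast // pnatX pnat_id.
have [|D [P fP]] := @periodic_maps_are_polyfracts p 1 (fun _ => p ^ alpha)%N _
  hp (fun _ => ex_intro _ alpha erefl) pZ (fun x => f (x ord0)).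
  by move=> x y /(_ ord0); exact: periodic_mod fper _ _.
exists D, (fun d => P [ffun _ => d]) => x; rewrite (fP (fun _ => x)).
rewrite /polyfract /polyfract1 (reindex (fun d : 'I_D => [ffun _ : 'I_1 => d])).
  by apply: eq_bigr => d _; rewrite big_ord1 ffunE.
exists (fun e : {ffun 'I_1 -> 'I_D} => e ord0) => [d _|e _].
  by rewrite ffunE.
by apply/ffunP => i; rewrite ffunE (ord1 i).
Qed.
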